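(* Let $N$ be a fuzzy negation and let $D_\top$ be the greatest disjunctor, $D_\top(0,0)=0$ and $D_\top(x,y)=1$ otherwise. Then the $(A,N)$-implication $I_{D_\top,N}(x,y)=D_\top(N(x),y)$ does not satisfy (A5) with any aggregation function.
   Context: Aggregation function: $A:[0,1]^2\to[0,1]$ non-decreasing in each variable with $A(0,0)=0$, $A(1,1)=1$. Fuzzy negation: non-increasing $N:[0,1]\to[0,1]$ with $N(0)=1$, $N(1)=0$. A fuzzy set on a nonempty set $U$ is a map $U\to[0,1]$, normal if it attains $1$. ''$I$ satisfies (A5) with $A$'': for all nonempty sets $U,V$, all normal fuzzy sets $D$ on $U$, $B$ on $V$ and every $y\in V$, $\sup_{x\in U}A(D(x),I(D(x),B(y)))=B(y)$. *)

From Stdlib Require Import Reals.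
Open Scope R_scope.

Definition in01 (x : R) : Prop := 0 <= x <= 1.

(* Aggregation function A : [0,1]^2 -> [0,1], non-decreasing in each variable,
   A(0,0)=0, A(1,1)=1.  Represented as R -> R -> R; only values on [0,1] matter. *)
Definition aggregation_function (A : R -> R -> R) : Prop :=
  (forall x y, in01 x -> in01 y -> in01 (A x y)) /\
  (forall x1 x2 y, in01 x1 -> in01 x2 -> in01 y -> x1 <= x2 -> A x1 y <= A x2 y) /\
  (forall x y1 y2, in01 x -> in01 y1 -> in01 y2 -> y1 <= y2 -> A x y1 <= A x y2) /\
  A 0 0 = 0 /\ A 1 1 = 1.

Definition fuzzy_negation (N : R -> R) : Prop :=
  (forall x, in01 x -> in01 (N x)) /\
  (forall x y, in01 x -> in01 y -> x <= y -> N y <= N x) /\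
  N 0 = 1 /\ N 1 = 0.

Definition fuzzy_set {U : Type} (D : U -> R) : Prop := forall u, in01 (D u).
Definition normal_fuzzy_set {U : Type} (D : U -> R) : Prop :=
  fuzzy_set D /\ exists u, D u = 1.

Definition D_top (x y : R) : R :=
  if Req_EM_T x 0 then (if Req_EM_T y 0 then 0 else 1) else 1.

Definition I_DN (N : R -> R) (x y : R) : R := D_top (N x) y.

(* I satisfies (A5) with A: for all nonempty U, V, normal fuzzy sets D on U, B on V
   and every y in V, sup_{x in U} A(D x, I(D x, B y)) = B y.
   The supremum equation is written as "B y is the least upper bound". *)
Definition satisfies_A5 (I A : R -> R -> R) : Prop :=
  forall (U V : Type) (D : U -> R) (B : V -> R),
    inhabited U -> inhabited V ->
    normal_fuzzy_set D -> normal_fuzzy_set B ->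
    forall y : V,
      is_lub (fun z => exists x : U, z = A (D x) (I (D x) (B y))) (B y).

(* Under (A5), taking for D the constant 1 on a one-point set and for B a
   normal fuzzy set attaining the value y forces A(1, I(1, y)) <= y.  But
   D_top(x, y) = 1 whenever y > 0, so for I = I_{D_top,N} and any N we get
   A(1, I(1, 1/2)) = A(1, 1) = 1 > 1/2. *)

From Stdlib Require Import Reals Lra.
Open Scope R_scope.

Lemma D_top_r_neq0 (x y : R) : y <> 0 -> D_top x y = 1.
Proof.
  intros Hy; unfold D_top.
  destruct (Req_EM_T x 0); [destruct (Req_EM_T y 0)|]; easy.
Qed.

Lemma I_DN_1l (N : R -> R) (y : R) : y <> 0 -> I_DN N 1 y = 1.
Proof. exact (D_top_r_neq0 (N 1) y). Qed.

Lemma satisfies_A5_1l_le (I A : R -> R -> R) (y : R) :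
  satisfies_A5 I A -> in01 y -> A 1 (I 1 y) <= y.
Proof.
  intros HA5 Hy.
  assert (HD : normal_fuzzy_set (fun _ : unit => 1)).
  { split; [intros _; unfold in01; lra | now exists tt]. }
  assert (HB : normal_fuzzy_set (fun b : bool => if b then 1 else y)).
  { split; [intros [|]; unfold in01 in *; lra | now exists true]. }
  destruct (HA5 unit bool _ _ (inhabits tt) (inhabits true) HD HB false)
    as [Hub _].
  exact (Hub _ (ex_intro _ tt eq_refl)).
Qed.

Theorem proposition4p11 :
  forall N : R -> R, fuzzy_negation N ->
  forall A : R -> R -> R, aggregation_function A ->
  ~ satisfies_A5 (I_DN N) A.
Proof.
  intros N _ A HA HA5.
  destruct HA as (_ & _ & _ & _ & HA11).
  assert (Hle : A 1 (I_DN N 1 (/ 2)) <= / 2).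
  { apply satisfies_A5_1l_le; [exact HA5 | unfold in01; lra]. }
  rewrite I_DN_1l, HA11 in Hle by lra.
  lra.
Qed.
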